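(* Let $\varphi\colon\mathcal{M}\to\mathcal{X}$ be a smooth lift, $y\in\mathcal{M}$, $x=\varphi(y)$. Then $W_y=\{w\in\mathcal{E}: \exists\,\alpha>0 \text{ such that } y \text{ is 2-critical for } g=f\circ\varphi \text{ with } f(x')=\langle x',w\rangle+\tfrac{\alpha}{2}\|x'-x\|^2\}$. In particular, $W_y$ is a convex cone.
   Context: $\mathcal{E}$ is a finite-dimensional real inner product space, $\mathcal{M}$ a smooth manifold, and $\varphi\colon\mathcal{M}\to\mathcal{E}$ smooth with $\varphi(\mathcal{M})=\mathcal{X}$. For $f\colon\mathcal{E}\to\mathbb{R}$, $g=f\circ\varphi$; $y$ is 2-critical for $g$ if $(g\circ c)'(0)=0$ and $(g\circ c)''(0)\ge0$ for all smooth curves $c\colon\mathbb{R}\to\mathcal{M}$ with $c(0)=y$. $W_y$ is the set of $w\in\mathcal{E}$ for which there exists a twice differentiable $f\colon\mathcal{E}\to\mathbb{R}$ with $\nabla f(x)=w$ and $y$ 2-critical for $g=f\circ\varphi$. *)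

From HB Require Import structures.
From mathcomp Require Import all_boot all_order all_algebra.
From mathcomp Require Import all_classical all_reals all_analysis.
Set Implicit Arguments. Unset Strict Implicit. Unset Printing Implicit Defensive.
Import Order.TTheory GRing.Theory Num.Theory.
Import numFieldNormedType.Exports.
Local Open Scope classical_set_scope.
Local Open Scope ring_scope.

Fixpoint Dseq (R : realType) (V W : normedModType R) (vs : seq V) (f : V -> W)
  : V -> W :=
  match vs with
  | [::] => f
  | v :: vs' => fun x => 'D_v (Dseq vs' f) x
  end.

Definition smooth_on (R : realType) (V W : normedModType R) (A : set V)
  (f : V -> W) : Prop :=
  forall (vs : seq V) (x : V), A x ->
    (forall v : V, derivable (Dseq vs f) x v) /\ {for x, continuous (Dseq vs f)}.

Record manifold (R : realType) (M : Type) (m : nat) := Manifold {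
  chart_idx : Type;
  chart_dom : chart_idx -> set M;
  chart : chart_idx -> M -> 'rV[R]_m;
  chart_cover : forall p : M, exists i, chart_dom i p;
  chart_inj : forall i p q, chart_dom i p -> chart_dom i q ->
                chart i p = chart i q -> p = q;
  chart_open : forall i j, open (chart i @` (chart_dom i `&` chart_dom j));
  chart_open_dom : forall i, open (chart i @` chart_dom i);
  chart_smooth_transition : forall i j, exists F : 'rV[R]_m -> 'rV[R]_m,
      smooth_on (chart i @` (chart_dom i `&` chart_dom j)) F /\
      (forall p, chart_dom i p -> chart_dom j p -> F (chart i p) = chart j p)
}.

Definition smooth_curve (R : realType) (M : Type) (m : nat)
  (A : manifold R M m) (c : R -> M) : Prop :=
  forall t : R, exists i : chart_idx A, exists2 e : R, 0 < e &
    (forall s : R, `|s - t| < e -> chart_dom i (c s)) /\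
    smooth_on [set s : R | `|s - t| < e] (fun s => chart i (c s)).

Definition smooth_map (R : realType) (M : Type) (m : nat) (W : normedModType R)
  (A : manifold R M m) (phi : M -> W) : Prop :=
  forall i : chart_idx A, exists F : 'rV[R]_m -> W,
    smooth_on (chart i @` chart_dom i) F /\
    (forall p, chart_dom i p -> F (chart i p) = phi p).

(* The Euclidean space E = R^n with the standard inner product. *)
Definition dotp (R : realType) (n : nat) (u v : 'rV[R]_n) : R :=
  (u *m v^T) 0 0.

(* Gradient: the vector of partial derivatives (for differentiable f,
   <grad f x, h> = 'd f x h). *)
Definition grad (R : realType) (n : nat) (f : 'rV[R]_n -> R) (x : 'rV[R]_n)
  : 'rV[R]_n := \row_j ('d f x (delta_mx 0 j)).

Definition twice_differentiable (R : realType) (n : nat) (f : 'rV[R]_n -> R)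
  : Prop :=
  (forall x, differentiable f x) /\ (forall x, differentiable (grad f) x).

Definition two_critical (R : realType) (M : Type) (m : nat)
  (A : manifold R M m) (g : M -> R) (y : M) : Prop :=
  forall c : R -> M, smooth_curve A c -> c 0 = y ->
    derive1 (g \o c) 0 = 0 /\ 0 <= derive1 (derive1 (g \o c)) 0.

Definition Wset (R : realType) (M : Type) (m n : nat) (A : manifold R M m)
  (phi : M -> 'rV[R]_n) (y : M) : set 'rV[R]_n :=
  [set w | exists f : 'rV[R]_n -> R,
     twice_differentiable f /\ grad f (phi y) = w /\ two_critical A (f \o phi) y].

(* Along a smooth curve c through y, with gamma = phi o c, the second-order
   chain rule gives (f o gamma)'(0) = <grad f(x), gamma'(0)> and
   (f o gamma)''(0) =
     <Hess f(x) gamma'(0), gamma'(0)> + <grad f(x), gamma''(0)>.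
   Hence 2-criticality of f o phi depends on f only through w = grad f(x) and
   the Hessian form, which is bounded by C |v|^2; replacing the Hessian by
   alpha Id with alpha > C preserves 2-criticality, and the quadratic test
   function realises exactly this replacement.  The resulting conditions,
   <w, gamma'(0)> = 0 and alpha |gamma'(0)|^2 + <w, gamma''(0)> >= 0 for all
   curves, are stable under adding the pairs (w, alpha) and scaling them by
   a >= 0, so W_y is a convex cone.
   Smoothness is only available through continuous partial derivatives in
   charts, so the chain rule for curves is proved directly, by the mean value
   theorem along a staircase changing one coordinate at a time. *)

From HB Require Import structures.
From mathcomp Require Import all_boot all_order all_algebra.
From mathcomp Require Import all_classical all_reals all_analysis.
From mathcomp Require Import lra ring.
Import Order.TTheory GRing.Theory Num.Theory.
Import numFieldNormedType.Exports.
Local Open Scope classical_set_scope.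
Local Open Scope ring_scope.

Section directional_derivatives.
Context {R : realType} {V : normedModType R}.

Lemma is_derive_along_line (W : normedModType R) (G : V -> W) (a v : V) (t : R)
    (dG : W) :
  is_derive (a + t *: v) v G dG -> is_derive t 1 (fun s => G (a + s *: v)) dG.
Proof.
have quotE : (fun h : R => h^-1 *: (G (a + (h *: 1 + t) *: v) - G (a + t *: v)))
    = (fun h : R => h^-1 *: (G (h *: v + (a + t *: v)) - G (a + t *: v))).
  by apply: funext => h; rewrite [h *: 1]mulr1 scalerDl addrCA addrA.
by move=> [dG_ex dG_val]; split; rewrite /derivable /derive /= quotE.
Qed.

Lemma cvg_add_scaled0 {W : normedModType R} (c : W) {g : R -> W} {d : W} :
  g @ 0^' --> d -> (fun h => c + h *: g h) @ 0^' --> c.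
Proof.
move=> gd; rewrite -[X in _ --> X]addr0; apply: cvgD; first exact: cvg_cst.
by rewrite -(scale0r d); apply: cvgZ => //; exact: cvg_within.
Qed.

Lemma derivable_cvg_dnbhs {W : normedModType R} {f : V -> W} {a v : V} :
  derivable f a v -> (fun h : R => f (h *: v + a)) @ 0^' --> f a.
Proof.
move=> df; pose quot h := h^-1 *: (f (h *: v + a) - f a).
have quot_lim : quot @ 0^' --> 'D_v f a by exact: df.
have -> : (fun h : R => f (h *: v + a)) = fun h => f a + h *: quot h.
  apply: funext => h; have [->|h0] := eqVneq h 0.
    by rewrite !scale0r add0r addr0.
  by rewrite /quot scalerA mulfV // scale1r addrCA subrr addr0.
exact: cvg_add_scaled0 _ quot_lim.
Qed.

Lemma is_derive_affine_quotient {W : normedModType R} {f : V -> W} {a v : V}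
    {c : W} (c2 : W) :
  (forall h : R, h != 0 -> h^-1 *: (f (h *: v + a) - f a) = c + h *: c2) ->
  is_derive a v f c.
Proof.
move=> quotE.
have L : (fun h : R => h^-1 *: ((f \o shift a) (h *: v) - f a)) @ 0^' --> c.
  apply: cvg_trans (cvg_add_scaled0 c (cvg_cst c2)); apply: near_eq_cvg; near=> h.
  by rewrite /= quotE //; near: h; exact: nbhs_dnbhs_neq.
by apply: DeriveDef; [exact: cvgP L | exact: cvg_lim L].
Unshelve. all: by end_near.
Qed.

Lemma MVT_dir (G D : V -> R) (a v : V) (d : R) :
  (forall t, `|t| <= `|d| -> is_derive (a + t *: v) v G (D (a + t *: v))) ->
  exists2 xi, `|xi| <= `|d| & G (a + d *: v) - G a = d * D (a + xi *: v).
Proof.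
move=> dG; pose g s := G (a + s *: v).
have in_range s : s \in `[Num.min 0 d, Num.max 0 d] -> `|s| <= `|d|.
  rewrite in_itv /=; case: (leP 0 d) => [d0|d0] /andP[s1 s2].
    by rewrite !ger0_norm.
  by rewrite !ler0_norm ?lerN2 // ltW.
have dg s : s \in `[Num.min 0 d, Num.max 0 d] -> is_derive s 1 g (D (a + s *: v)).
  by move=> /in_range /dG; exact: is_derive_along_line.
have min_le_max : Num.min 0 d <= Num.max 0 d by rewrite ge_min !le_max lexx.
have g_der s : s \in `]Num.min 0 d, Num.max 0 d[ ->
    is_derive s 1 g (D (a + s *: v)).
  by move=> s_in; apply: dg; apply: subset_itv_oo_cc.
have g_cont : {within `[Num.min 0 d, Num.max 0 d], continuous g}.
  by apply: derivable_within_continuous => s /dg [].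
have [xi xi_in E] := MVT_segment min_le_max g_der g_cont.
exists xi; first exact: in_range.
case: (leP 0 d) => d0 in E *.
  by rewrite /g scale0r addr0 subr0 mulrC in E.
rewrite /g scale0r addr0 sub0r mulrN in E.
by rewrite -opprB E opprK mulrC.
Qed.

End directional_derivatives.

Section staircase.
Context {R : realType}.

Lemma ler_norm_entry {m n : nat} (M : 'M[R]_(m, n)) i j : `|M i j| <= `|M|.
Proof.
rewrite [leRHS]/Num.Def.normr /= mx_normrE.
exact: le_trans _ (le_bigmax _ _ (i, j)).
Qed.

Lemma mx_normr_le {m n : nat} (M : 'M[R]_(m, n)) (c : R) :
  0 <= c -> (forall i j, `|M i j| <= c) -> `|M| <= c.
Proof.
move=> c0 Mc; rewrite [leLHS]/Num.Def.normr /= mx_normrE.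
by apply: bigmax_le => // -[i j] _; apply: Mc.
Qed.

(* The k-th corner of the path from p to q changing one coordinate at a time. *)
Definition stair {m : nat} (p q : 'rV[R]_m) (k : nat) : 'rV[R]_m :=
  \row_i (if (i < k)%N then q 0 i else p 0 i).

Lemma stair0 {m} (p q : 'rV[R]_m) : stair p q 0 = p.
Proof. by apply/rowP => i; rewrite !mxE. Qed.

Lemma stair_last {m} (p q : 'rV[R]_m) : stair p q m = q.
Proof. by apply/rowP => i; rewrite !mxE ltn_ord. Qed.

Lemma stairS {m} (p q : 'rV[R]_m) (k : 'I_m) :
  stair p q k.+1 = stair p q k + (q 0 k - p 0 k) *: delta_mx 0 k.
Proof.
apply/rowP => i; rewrite !mxE /= -val_eqE /= ltnS.
case: ltngtP => [ik|ik|/val_inj->]; rewrite ?mulr0 ?addr0 //.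
by rewrite mulr1 addrC subrK.
Qed.

Lemma dist_stair {m} (p q : 'rV[R]_m) (k : 'I_m) t :
  `|t| <= `|q 0 k - p 0 k| ->
  `|p - (stair p q k + t *: delta_mx 0 k)| <= `|p - q|.
Proof.
move=> t_le; apply: mx_normr_le => // i j.
rewrite (ord1 i) !mxE /= -val_eqE /=.
case: ltngtP => [jk|jk|/val_inj->]; rewrite ?mulr0 ?addr0.
- by have := ler_norm_entry (p - q) 0 j; rewrite !mxE.
- by rewrite subrr normr0.
- rewrite mulr1 opprD addrA subrr sub0r normrN; apply: le_trans t_le _.
  by have := ler_norm_entry (p - q) 0 k; rewrite !mxE distrC.
Qed.

Lemma MVT_stair {m} {G : 'rV[R]_m -> R} {D : 'I_m -> 'rV[R]_m -> R}
    {p q : 'rV[R]_m} {r : R} :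
  (forall z j, `|p - z| < r -> is_derive z (delta_mx 0 j) G (D j z)) ->
  `|p - q| < r ->
  exists xi : 'I_m -> R, (forall k, `|xi k| <= `|q 0 k - p 0 k|) /\
    G q - G p =
      \sum_k (q 0 k - p 0 k) * D k (stair p q k + xi k *: delta_mx 0 k).
Proof.
move=> dG pq_r.
have step k : exists2 xi, `|xi| <= `|q 0 k - p 0 k| &
    G (stair p q k.+1) - G (stair p q k) =
      (q 0 k - p 0 k) * D k (stair p q k + xi *: delta_mx 0 k).
  rewrite stairS; apply: MVT_dir => t t_le; apply: dG.
  by apply: le_lt_trans pq_r; apply: dist_stair.
have /fin_all_exists2[xi xi_le xiE] := step.
exists xi; split => //.
have -> : G q - G p = \sum_(0 <= k < m) (G (stair p q k.+1) - G (stair p q k)).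
  by rewrite telescope_sumr // stair_last stair0.
by rewrite big_mkord; apply: eq_bigr => k _; rewrite xiE.
Qed.

End staircase.

Section chain_rule.
Context {R : realType}.

Lemma is_derive_comp_partials {m} (G : 'rV[R]_m -> R)
    (D : 'I_m -> 'rV[R]_m -> R) (b : R -> 'rV[R]_m) (t : R) :
  (\forall z \near b t, forall j, is_derive z (delta_mx 0 j) G (D j z)) ->
  (forall j, {for b t, continuous (D j)}) ->
  derivable b t 1 ->
  is_derive t 1 (G \o b) (\sum_j ('D_1 b t) 0 j * D j (b t)).
Proof.
move=> dG cD db; set p := b t; set d := 'D_1 b t.
have [r r0 dG_r] : exists2 r : R, 0 < r &
    forall z j, `|p - z| < r -> is_derive z (delta_mx 0 j) G (D j z).
  have [r r0 Hr] := (nbhs_ballP _ _).1 dG.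
  by exists r => // z j pz; apply: Hr; rewrite -ball_normE.
pose q h := b (h *: 1 + t); pose qd h := h^-1 *: (q h - p).
have qd_d : qd @ 0^' --> d by exact: db.
have q_p : q @ 0^' --> p by exact: derivable_cvg_dnbhs db.
have near_r : \forall h \near 0^', `|p - q h| < r.
  exact: (cvgrPdist_lt _ _).1 q_p _ r0.
have xi_ex h : exists xi : 'I_m -> R, `|p - q h| < r ->
    (forall k, `|xi k| <= `|q h 0 k - p 0 k|) /\
    G (q h) - G p =
      \sum_k (q h 0 k - p 0 k) * D k (stair p (q h) k + xi k *: delta_mx 0 k).
  case: (pselect (`|p - q h| < r)) => [pq_r|]; last by exists (fun=> 0).
  by have [xi xiP] := MVT_stair dG_r pq_r; exists xi.
have [xi xiP] := choice xi_ex.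
pose pt h (k : 'I_m) := stair p (q h) k + xi h k *: delta_mx 0 k.
have pt_p k : pt ^~ k @ 0^' --> p.
  apply/cvgrPdist_lt => e e0; near=> h.
  have /xiP[xi_le _] : `|p - q h| < r by near: h.
  apply: (@le_lt_trans _ _ `|p - q h|); first exact: dist_stair.
  by near: h; exact: (cvgrPdist_lt _ _).1 q_p _ e0.
have quotE : {near 0^', (fun h => \sum_k qd h 0 k * D k (pt h k)) =1
    (fun h => h^-1 *: ((G \o b) (h *: 1 + t) - (G \o b) t))}.
  near=> h; have /xiP[_ ->] : `|p - q h| < r by near: h.
  by rewrite [_ *: _]mulr_sumr; apply: eq_bigr => k _; rewrite /qd !mxE mulrA.
have quot_lim : (fun h => \sum_k qd h 0 k * D k (pt h k)) @ 0^' -->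
    \sum_k d 0 k * D k p.
  apply: cvg_big => [|k _]; first exact: add_continuous.
  apply: (@cvgM _ _ _ _ (fun h => qd h 0 k) (fun h => D k (pt h k))).
    exact: cvg_comp qd_d (@coord_continuous R 1 m 0 k d).
  exact: cvg_comp (pt_p k) (cD k).
have L : (fun h => h^-1 *: ((G \o b) (h *: 1 + t) - (G \o b) t)) @ 0^' -->
    \sum_k d 0 k * D k p.
  exact: cvg_trans (near_eq_cvg quotE) quot_lim.
by apply: DeriveDef; [exact: cvgP L | exact: cvg_lim L].
Unshelve. all: by end_near.
Qed.

End chain_rule.

Section smooth_composition.
Context {R : realType}.

Lemma Dseq_rcons (V W : normedModType R) (vs : seq V) (v : V) (f : V -> W) :
  Dseq (rcons vs v) f = Dseq vs ('D_v f).
Proof. by elim: vs => [|w vs IH] //=; rewrite IH. Qed.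

Lemma smooth_on_derive {V W : normedModType R} {U : set V} {f : V -> W} (v : V) :
  smooth_on U f -> smooth_on U ('D_v f).
Proof. by move=> sf vs; rewrite -Dseq_rcons; exact: sf. Qed.

Lemma is_derive_entry {V : normedModType R} {m n} {M : V -> 'M[R]_(m, n)}
    {t v : V} i j :
  derivable M t v -> is_derive t v (fun x => M x i j) ('D_v M t i j).
Proof.
by move=> dM; split; [move/derivable_mxP : dM; apply | rewrite derive_mx // mxE].
Qed.

Lemma is_derive_mx {V : normedModType R} {m n} (M : V -> 'M[R]_(m, n))
    (t v : V) (dM : 'M[R]_(m, n)) :
  (forall i j, is_derive t v (fun x => M x i j) (dM i j)) -> is_derive t v M dM.
Proof.
move=> dMij; have dM_ex : derivable M t v.
  by apply/derivable_mxP => i j; case: (dMij i j).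
split => //; rewrite derive_mx //; apply/matrixP => i j.
by rewrite mxE; case: (dMij i j).
Qed.

Lemma is_derive_comp_partials_mx {m n} (F : 'rV[R]_m -> 'rV[R]_n)
    (b : R -> 'rV[R]_m) (t : R) :
  (\forall z \near b t, forall j, derivable F z (delta_mx 0 j)) ->
  (forall j, {for b t, continuous ('D_(delta_mx 0 j) F)}) ->
  derivable b t 1 ->
  is_derive t 1 (F \o b) (\sum_j ('D_1 b t) 0 j *: 'D_(delta_mx 0 j) F (b t)).
Proof.
move=> dF cF db; apply: is_derive_mx => i k; rewrite (ord1 i) summxE.
under eq_bigr do rewrite mxE.
apply: (is_derive_comp_partials (fun z => F z 0 k)
  (fun j z => 'D_(delta_mx 0 j) F z 0 k)) db.
- by apply: filterS dF => z dFz j; exact: is_derive_entry.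
- by move=> j; exact: cvg_comp (cF j) (@coord_continuous R 1 n 0 k _).
Qed.

Lemma is_derive_comp_smooth {m n} {F : 'rV[R]_m -> 'rV[R]_n} {U : set 'rV[R]_m}
    {b : R -> 'rV[R]_m} {t : R} :
  open U -> smooth_on U F -> U (b t) -> derivable b t 1 ->
  is_derive t 1 (F \o b) (\sum_j ('D_1 b t) 0 j *: 'D_(delta_mx 0 j) F (b t)).
Proof.
move=> oU sF Ubt; apply: is_derive_comp_partials_mx.
- apply: filterS (open_nbhs_nbhs (conj oU Ubt)) => z Uz j.
  exact: (sF [::] z Uz).1.
- by move=> j; exact: (sF [:: delta_mx 0 j] _ Ubt).2.
Qed.

Lemma derivable_sum_scale {V : normedModType R} {m n} (a : V -> 'rV[R]_m)
    (f : 'I_m -> V -> 'rV[R]_n) (t v : V) :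
  derivable a t v -> (forall j, derivable (f j) t v) ->
  derivable (fun s => \sum_j a s 0 j *: f j s) t v.
Proof.
move=> da df; apply/derivable_mxP => i k; rewrite (ord1 i).
have -> : (fun s => (\sum_j a s 0 j *: f j s) 0 k) =
    \sum_j (fun s => a s 0 j * f j s 0 k).
  apply: funext => s; rewrite summxE fct_sumE.
  by apply: eq_bigr => j _; rewrite mxE.
apply: derivable_sum => j; apply: derivableM.
- by move/derivable_mxP : da; apply.
- by move/derivable_mxP : (df j); apply.
Qed.

Lemma near_interval {t e s : R} :
  `|s - t| < e -> \forall s' \near s, `|s' - t| < e.
Proof.
move=> st; apply/nbhs_ballP; exists (e - `|s - t|) => [|z].
  by rewrite /= subr_gt0.
rewrite -ball_normE /= => sz.
by have := ler_distD s z t; rewrite (distrC z s); lra.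
Qed.

End smooth_composition.

Lemma smooth_comp_curve_derivable2 {R : realType} {M : Type} {m n}
    {A : manifold R M m} {phi : M -> 'rV[R]_n} {c : R -> M} (t : R) :
  smooth_map A phi -> smooth_curve A c ->
  derivable (phi \o c) t 1 /\ derivable (derive1 (phi \o c)) t 1.
Proof.
move=> sphi sc; have [i [e e0 [c_dom sb]]] := sc t.
have [F [sF F_phi]] := sphi i.
pose b s := chart i (c s); pose U := chart i @` chart_dom i.
have oU : open U := @chart_open_dom _ _ _ A i.
have Ub s : `|s - t| < e -> U (b s) by move=> /c_dom; exists (c s).
have t_in : `|t - t| < e by rewrite subrr normr0.
pose G s := \sum_j ('D_1 b s) 0 j *: 'D_(delta_mx 0 j) F (b s).
have phi_c_loc s : `|s - t| < e -> is_derive s 1 (phi \o c) (G s).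
  move=> st; have := is_derive_comp_smooth oU sF (Ub s st) ((sb [::] s st).1 1).
  apply: near_eq_is_derive; have := near_interval st.
  by apply: filterS => s' /c_dom /F_phi.
split; first by have [] := phi_c_loc t t_in.
apply: (near_eq_derivable (f := G)).
  have := near_interval t_in; apply: filterS => s st.
  by rewrite derive1E; have [_ ->] := phi_c_loc s st.
apply: derivable_sum_scale => [|j].
  exact: (smooth_on_derive _ sb [::] t t_in).1 1.
have sDF := smooth_on_derive (delta_mx 0 j) sF.
by have [] := is_derive_comp_smooth oU sDF (Ub t t_in) ((sb [::] t t_in).1 1).
Qed.

Section dotp_calculus.
Context {R : realType}.

Lemma dotpE {n} (u v : 'rV[R]_n) : dotp u v = \sum_k u 0 k * v 0 k.
Proof. by rewrite /dotp !mxE; apply: eq_bigr => k _; rewrite !mxE. Qed.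

Lemma dotpDl {n} (u1 u2 v : 'rV[R]_n) : dotp (u1 + u2) v = dotp u1 v + dotp u2 v.
Proof. by rewrite /dotp mulmxDl mxE. Qed.

Lemma dotpZl {n} (a : R) (u v : 'rV[R]_n) : dotp (a *: u) v = a * dotp u v.
Proof. by rewrite /dotp -scalemxAl mxE. Qed.

Lemma dotp_delta {n} (j : 'I_n) (u : 'rV[R]_n) : dotp (delta_mx 0 j) u = u 0 j.
Proof. by rewrite /dotp -rowE !mxE. Qed.

Lemma diff_gradE {n} (f : 'rV[R]_n -> R) p v : 'd f p v = dotp (grad f p) v.
Proof.
rewrite {1}(row_sum_delta v) linear_sum dotpE; apply: eq_bigr => k _.
by rewrite linearZ /= !mxE mulrC.
Qed.

Lemma is_derive_dotp {V : normedModType R} {n} {u v : V -> 'rV[R]_n} {t w : V} :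
  derivable u t w -> derivable v t w ->
  is_derive t w (fun s => dotp (u s) (v s))
    (dotp ('D_w u t) (v t) + dotp (u t) ('D_w v t)).
Proof.
move=> du dv; rewrite !dotpE -big_split /=.
have -> : (fun s => dotp (u s) (v s)) = \sum_k (fun s => u s 0 k * v s 0 k).
  by apply: funext => s; rewrite dotpE fct_sumE.
apply: is_derive_sum => k; apply: is_derive_eq.
  exact: is_deriveM (is_derive_entry 0 k du) (is_derive_entry 0 k dv).
by rewrite addrC; congr (_ + _); exact: mulrC.
Qed.

Lemma derive1_comp_grad {n} (f : 'rV[R]_n -> R) (g : R -> 'rV[R]_n) (t : R) :
  differentiable f (g t) -> derivable g t 1 ->
  derive1 (f \o g) t = dotp (grad f (g t)) (derive1 g t).
Proof.
move=> df /derivable1_diffP dg.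
rewrite derive1E'; last exact: differentiable_comp.
by rewrite diff_comp // /= -derive1E' // diff_gradE.
Qed.

Lemma derive2_comp_grad {n} (f : 'rV[R]_n -> R) (g : R -> 'rV[R]_n) (t : R) :
  (forall p, differentiable f p) -> differentiable (grad f) (g t) ->
  (forall s, derivable g s 1) -> derivable (derive1 g) t 1 ->
  derive1 (derive1 (f \o g)) t =
    dotp ('d (grad f) (g t) (derive1 g t)) (derive1 g t)
    + dotp (grad f (g t)) (derive1 (derive1 g) t).
Proof.
move=> df dgrad dg ddg.
have -> : derive1 (f \o g) = fun s => dotp (grad f (g s)) (derive1 g s).
  by apply: funext => s; rewrite (derive1_comp_grad _ _ _ (df _) (dg s)).
have dg_t : differentiable g t by apply/derivable1_diffP/dg.
have d_grad_g : differentiable (grad f \o g) t by exact: differentiable_comp.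
have dr_grad_g : derivable (grad f \o g) t 1 by exact: diff_derivable.
have grad_g' : 'D_1 (grad f \o g) t = 'd (grad f) (g t) (derive1 g t).
  by rewrite deriveE // diff_comp // derive1E'.
rewrite derive1E; have [_ ->] := is_derive_dotp dr_grad_g ddg.
by rewrite grad_g' -!derive1E.
Qed.

End dotp_calculus.

Section quadratic_test_function.
Context {R : realType}.

Definition quad_test {n} (w x : 'rV[R]_n) (alpha : R) (p : 'rV[R]_n) : R :=
  dotp p w + alpha / 2 * dotp (p - x) (p - x).

Lemma quad_testE {n} (w x : 'rV[R]_n) alpha :
  quad_test w x alpha =
    \sum_k (fun p : 'rV[R]_n =>
      p 0 k * w 0 k + alpha / 2 * ((p 0 k - x 0 k) * (p 0 k - x 0 k))).
Proof.
apply: funext => p; rewrite fct_sumE /quad_test !dotpE mulr_sumr -big_split /=.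
by apply: eq_bigr => k _; rewrite !mxE.
Qed.

Lemma quad_test_differentiable {n} (w x : 'rV[R]_n) alpha p :
  differentiable (quad_test w x alpha) p.
Proof.
have coord k : differentiable (fun q : 'rV[R]_n => q 0 k) p.
  exact: (@differentiable_coord R 1 n p 0 k).
rewrite quad_testE; apply: differentiable_sum => k.
apply: differentiableD; first exact: differentiableM.
by apply: differentiableM => //; apply: differentiableM; exact: differentiableB.
Qed.

Lemma quad_test_derive {n} (w x : 'rV[R]_n) alpha p v :
  is_derive p v (quad_test w x alpha) (dotp v w + alpha * dotp v (p - x)).
Proof.
apply: (is_derive_affine_quotient (alpha / 2 * dotp v v)) => h h0.
rewrite quad_testE !fct_sumE -sumrB !dotpE !mulr_sumr !scaler_sumr -!big_split /=.
by apply: eq_bigr => k _; rewrite !mxE /GRing.scale /=; field.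
Qed.

Lemma grad_quad_test {n} (w x : 'rV[R]_n) alpha p :
  grad (quad_test w x alpha) p = w + alpha *: (p - x).
Proof.
apply/rowP => j; rewrite !mxE -deriveE; last exact: quad_test_differentiable.
have [_ ->] := quad_test_derive w x alpha p (delta_mx 0 j).
by rewrite !dotp_delta !mxE.
Qed.

Lemma diff_grad_quad_test {n} (w x : 'rV[R]_n) alpha p :
  differentiable (grad (quad_test w x alpha)) p /\
  forall v, 'd (grad (quad_test w x alpha)) p v = alpha *: v.
Proof.
have -> : grad (quad_test w x alpha) = fun q => w + alpha *: (q - x).
  by apply: funext => q; rewrite grad_quad_test.
have dg : differentiable (fun q => w + alpha *: (q - x)) p.
  apply: differentiableD; first exact: differentiable_cst.
  by apply: differentiableZ; apply: differentiableB.
split=> // v; rewrite -deriveE //.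
apply: derive_val; apply: (is_derive_affine_quotient 0) => h h0.
rewrite scaler0 addr0 opprD addrACA subrr add0r -scalerBr.
by rewrite -[h *: v + p - x]addrA addrK !scalerA; congr (_ *: _); field.
Qed.

Lemma quad_test_twice_differentiable {n} (w x : 'rV[R]_n) alpha :
  twice_differentiable (quad_test w x alpha).
Proof.
split=> p; first exact: quad_test_differentiable.
by case: (diff_grad_quad_test w x alpha p).
Qed.

End quadratic_test_function.

Section quadratic_forms.
Context {R : realType}.

Lemma sqr_entry_le_dotp {n} (v : 'rV[R]_n) j : v 0 j ^+ 2 <= dotp v v.
Proof.
rewrite dotpE (bigD1 j) //= -expr2 lerDl.
by apply: sumr_ge0 => k _; rewrite -expr2 sqr_ge0.
Qed.

Lemma dotp_ge0 {n} (v : 'rV[R]_n) : 0 <= dotp v v.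
Proof. by rewrite dotpE; apply: sumr_ge0 => k _; rewrite -expr2 sqr_ge0. Qed.

Lemma dotp_linear_bounded {n} (L : {linear 'rV[R]_n -> 'rV[R]_n}) :
  exists2 C, 0 <= C & forall v, dotp (L v) v <= C * dotp v v.
Proof.
pose a j k := L (delta_mx 0 j) 0 k.
exists (\sum_k \sum_j `|a j k|) => [|v].
  by apply: sumr_ge0 => k _; apply: sumr_ge0.
have -> : dotp (L v) v = \sum_k \sum_j a j k * (v 0 j * v 0 k).
  rewrite {1}(row_sum_delta v) linear_sum dotpE; apply: eq_bigr => k _.
  rewrite summxE mulr_suml; apply: eq_bigr => j _.
  by rewrite linearZ /= !mxE /a; ring.
rewrite mulr_suml; apply: ler_sum => k _.
rewrite mulr_suml; apply: ler_sum => j _.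
apply: le_trans (ler_norm _) _; rewrite normrM ler_wpM2l //.
have := sqr_entry_le_dotp v j; have := sqr_entry_le_dotp v k.
rewrite -(real_normK (num_real (v 0 j))) -(real_normK (num_real (v 0 k))).
rewrite normrM !expr2 => vk vj.
case: (leP `|v 0 j| `|v 0 k|) => [jk|/ltW kj].
  by apply: le_trans vk; rewrite ler_wpM2r.
by apply: le_trans vj; rewrite ler_wpM2l.
Qed.

End quadratic_forms.

Section second_order_criticality.
Context {R : realType} {M : Type} {m n : nat} {A : manifold R M m}
  {phi : M -> 'rV[R]_n} {y : M}.
Hypothesis phi_smooth : smooth_map A phi.

Local Notation x := (phi y).
Local Notation velocity c := (derive1 (phi \o c) 0).
Local Notation acceleration c := (derive1 (derive1 (phi \o c)) 0).

Lemma derive1_derive2_comp_curve {f : 'rV[R]_n -> R} {c : R -> M} :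
  twice_differentiable f -> smooth_curve A c -> c 0 = y ->
  derive1 (f \o phi \o c) 0 = dotp (grad f x) (velocity c) /\
  derive1 (derive1 (f \o phi \o c)) 0 =
    dotp ('d (grad f) x (velocity c)) (velocity c)
    + dotp (grad f x) (acceleration c).
Proof.
move=> [df dgrad] sc c0.
have d2 t := smooth_comp_curve_derivable2 t phi_smooth sc.
have := derive2_comp_grad f (phi \o c) 0 df (dgrad _)
  (fun t => (d2 t).1) (d2 0).2.
rewrite /= c0 => <-; split=> //.
by rewrite -c0 (derive1_comp_grad _ _ _ (df _) (d2 0).1).
Qed.

Lemma two_critical_quad_testP (w : 'rV[R]_n) (alpha : R) :
  two_critical A (quad_test w x alpha \o phi) y <->
  forall c, smooth_curve A c -> c 0 = y ->
    dotp w (velocity c) = 0 /\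
    0 <= alpha * dotp (velocity c) (velocity c) + dotp w (acceleration c).
Proof.
have [_ quad_hess] := diff_grad_quad_test w x alpha x.
have quad_C2 := quad_test_twice_differentiable w x alpha.
have grad_x : grad (quad_test w x alpha) x = w.
  by rewrite grad_quad_test subrr scaler0 addr0.
split=> crit c sc c0; have [e1 e2] := derive1_derive2_comp_curve quad_C2 sc c0;
  rewrite grad_x quad_hess dotpZl in e1 e2.
- by have := crit c sc c0; rewrite e1 e2.
- by rewrite e1 e2; exact: crit.
Qed.

Lemma two_critical_quad_test_Wset {w : 'rV[R]_n} {alpha : R} :
  two_critical A (quad_test w x alpha \o phi) y -> Wset A phi y w.
Proof.
move=> crit; exists (quad_test w x alpha); split; last split => //.
  exact: quad_test_twice_differentiable.
by rewrite grad_quad_test subrr scaler0 addr0.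
Qed.

Lemma Wset_two_critical_quad_test {w : 'rV[R]_n} :
  Wset A phi y w ->
  exists2 alpha, 0 < alpha & two_critical A (quad_test w x alpha \o phi) y.
Proof.
move=> [f [f_C2 [grad_w crit]]].
have [C C0 hess_le] := dotp_linear_bounded ('d (grad f) x).
exists (C + 1); first by rewrite ltr_wpDl.
apply/two_critical_quad_testP => c sc c0.
have [d1 d2] := crit c sc c0.
have [e1 e2] := derive1_derive2_comp_curve f_C2 sc c0.
rewrite e1 grad_w in d1; rewrite e2 grad_w in d2.
split=> //; apply: le_trans d2 _; rewrite mulrDl mul1r lerD2r.
by apply: le_trans (hess_le _) _; rewrite lerDl dotp_ge0.
Qed.

Lemma two_critical_quad_testD {w1 w2 : 'rV[R]_n} {alpha1 alpha2 : R} :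
  two_critical A (quad_test w1 x alpha1 \o phi) y ->
  two_critical A (quad_test w2 x alpha2 \o phi) y ->
  two_critical A (quad_test (w1 + w2) x (alpha1 + alpha2) \o phi) y.
Proof.
move=> /two_critical_quad_testP crit1 /two_critical_quad_testP crit2.
apply/two_critical_quad_testP => c sc c0.
have [d1 d2] := crit1 c sc c0; have [e1 e2] := crit2 c sc c0.
rewrite !dotpDl mulrDl d1 e1 addr0 addrACA; split=> //.
exact: addr_ge0.
Qed.

Lemma two_critical_quad_testZ {a : R} {w : 'rV[R]_n} {alpha : R} :
  0 <= a -> two_critical A (quad_test w x alpha \o phi) y ->
  two_critical A (quad_test (a *: w) x (a * alpha) \o phi) y.
Proof.
move=> a0 /two_critical_quad_testP crit; apply/two_critical_quad_testP => c sc c0.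
have [d1 d2] := crit c sc c0.
rewrite !dotpZl d1 mulr0; split=> //.
by rewrite -mulrA -mulrDr mulr_ge0.
Qed.

End second_order_criticality.

Theorem proposition3p17 (R : realType) (M : Type) (m n : nat)
  (A : manifold R M m) (phi : M -> 'rV[R]_n) (y : M) :
  smooth_map A phi ->
  let x := phi y in
  (forall w : 'rV[R]_n,
     Wset A phi y w <->
     exists2 alpha : R, 0 < alpha &
       two_critical A
         ((fun x' => dotp x' w + alpha / 2 * dotp (x' - x) (x' - x)) \o phi) y)
  /\ (forall w1 w2, Wset A phi y w1 -> Wset A phi y w2 -> Wset A phi y (w1 + w2))
  /\ (forall (a : R) w, 0 <= a -> Wset A phi y w -> Wset A phi y (a *: w)).
Proof.
move=> phi_smooth x; split; [|split].
- move=> w; split; first exact: Wset_two_critical_quad_test.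
  by case=> alpha _; exact: two_critical_quad_test_Wset.
- move=> w1 w2 /(Wset_two_critical_quad_test phi_smooth) [a1 _ crit1].
  move=> /(Wset_two_critical_quad_test phi_smooth) [a2 _ crit2].
  exact: two_critical_quad_test_Wset
    (two_critical_quad_testD phi_smooth crit1 crit2).
- move=> a w a0 /(Wset_two_critical_quad_test phi_smooth) [alpha _ crit].
  exact: two_critical_quad_test_Wset
    (two_critical_quad_testZ phi_smooth a0 crit).
Qed.
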